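(* Under the standing setup, assume that $f$ is bounded, i.e. $\sup_{q\in\mathcal P}\|f_q\|_\infty<\infty$. Then for all $u_0\in\mathbb R^d$, $\Big\|\frac{\mathscr S(h)u_0-u_0}{h}-\mathcal Qu_0\Big\|_\infty\to0$ as $h\searrow0$.
   Context: Standing setup: $d\in\mathbb N$; vectors in $\mathbb R^d$ with $\|u\|_\infty=\max_i|u_i|$; inequalities and suprema of vectors are componentwise; reals are identified with constant vectors. A $Q$-matrix is $q\in\mathbb R^{d\times d}$ with $q_{ii}\le0$, $q_{ij}\ge0$ ($i\ne j$), $\sum_jq_{ij}=0$. Let $\mathcal P$ be a set of $Q$-matrices and $f=(f_q)_{q\in\mathcal P}\subset\mathbb R^d$ with $\sup_{q\in\mathcal P}f_q=f_{q_0}=0$ for some $q_0\in\mathcal P$, such that $\mathcal Qu:=\sup_{q\in\mathcal P}(qu+f_q)$ is finite for every $u\in\mathbb R^d$. For $q\in\mathcal P$, $t\ge0$: $S_q(t)u_0:=e^{tq}u_0+\int_0^te^{sq}f_q\,ds$. For $h\ge0$: $\mathcal E_hu_0:=\sup_{q\in\mathcal P}S_q(h)u_0$. $P$ is the set of finite subsets $\pi\subset[0,\infty)$ with $0\in\pi$; $P_t:=\{\pi\in P:\max\pi=t\}$. For $\pi=\{t_0,\dots,t_m\}$ with $0=t_0<\dots<t_m$, $m\ge1$, $\mathcal E_\pi:=\mathcal E_{t_1-t_0}\circ\cdots\circ\mathcal E_{t_m-t_{m-1}}$, and $\mathcal E_{\{0\}}:=\mathcal E_0$. The Nisio semigroup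 of $(\mathcal P,f)$ is $\mathscr S(t)u_0:=\sup_{\pi\in P_t}\mathcal E_\pi u_0$. *)

From Stdlib Require Import Reals Lra List Factorial ClassicalEpsilon.
Import ListNotations.
Open Scope R_scope.

(* Vectors in R^d are functions nat -> R (only indices i < d matter);
   d x d matrices are functions nat -> nat -> R (only i, j < d matter). *)
Definition vec := nat -> R.
Definition mat := nat -> nat -> R.

Fixpoint fsum (n : nat) (g : nat -> R) : R :=
  match n with O => 0 | S n' => fsum n' g + g n' end.

Fixpoint vnorm (d : nat) (u : vec) : R :=
  match d with O => 0 | S d' => Rmax (vnorm d' u) (Rabs (u d')) end.

Definition matvec (d : nat) (q : mat) (u : vec) : vec :=
  fun i => fsum d (fun j => q i j * u j).

Definition matmul (d : nat) (a b : mat) : mat :=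
  fun i j => fsum d (fun k => a i k * b k j).

Definition idmat : mat := fun i j => if Nat.eqb i j then 1 else 0.

Fixpoint matpow (d : nat) (q : mat) (k : nat) : mat :=
  match k with O => idmat | S k' => matmul d q (matpow d q k') end.

Definition matexp (d : nat) (t : R) (q : mat) : mat :=
  fun i j => epsilon (inhabits 0) (fun l =>
    Un_cv (fun n => sum_f_R0 (fun k => t ^ k / INR (fact k) * matpow d q k i j) n) l).

Definition integral (g : R -> R) (a b : R) : R :=
  epsilon (inhabits 0) (fun I => exists pr : Riemann_integrable g a b, RiemannInt pr = I).

Definition Rsup (A : R -> Prop) : R := epsilon (inhabits 0) (fun l => is_lub A l).

Definition vsup (V : vec -> Prop) : vec :=
  fun i => Rsup (fun x => exists v, V v /\ v i = x).

Definition is_Qmatrix (d : nat) (q : mat) : Prop :=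
  (forall i, (i < d)%nat -> q i i <= 0) /\
  (forall i j, (i < d)%nat -> (j < d)%nat -> i <> j -> 0 <= q i j) /\
  (forall i, (i < d)%nat -> fsum d (fun j => q i j) = 0).

Definition Sq (d : nat) (q : mat) (fq : vec) (t : R) (u0 : vec) : vec :=
  fun i => matvec d (matexp d t q) u0 i
           + integral (fun s => matvec d (matexp d s q) fq i) 0 t.

Definition Eh (d : nat) (P : mat -> Prop) (f : mat -> vec) (h : R) (u0 : vec) : vec :=
  vsup (fun v => exists q, P q /\ v = Sq d q (f q) h u0).

Definition Qop (d : nat) (P : mat -> Prop) (f : mat -> vec) (u : vec) : vec :=
  vsup (fun v => exists q, P q /\ v = (fun i => matvec d q u i + f q i)).

(* A partition pi = {0 = t_0 < t_1 < ... < t_m} with m >= 1 is represented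
   by the list [t_1; ...; t_m]; pi = {0} by the empty list. *)
Fixpoint incr_from (prev : R) (l : list R) : Prop :=
  match l with [] => True | t :: l' => prev < t /\ incr_from t l' end.

Fixpoint Ecomp (d : nat) (P : mat -> Prop) (f : mat -> vec)
    (prev : R) (l : list R) (u : vec) : vec :=
  match l with
  | [] => u
  | t :: l' => Eh d P f (t - prev) (Ecomp d P f t l' u)
  end.

Definition Epi (d : nat) (P : mat -> Prop) (f : mat -> vec) (l : list R) (u : vec) : vec :=
  match l with [] => Eh d P f 0 u | _ => Ecomp d P f 0 l u end.

Definition in_Pt (t : R) (l : list R) : Prop :=
  incr_from 0 l /\ last (0 :: l) 0 = t.

Definition Nisio (d : nat) (P : mat -> Prop) (f : mat -> vec) (t : R) (u0 : vec) : vec :=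
  vsup (fun v => exists l, in_Pt t l /\ v = Epi d P f l u0).

(* The key estimate is |S(h)u0 - u0 - h Q u0| <= M h^2 for small h.  A second-order Taylor
   expansion of e^{hq} and of the integral term gives S_q(h)u0 = u0 + h (q u0 + f_q) + O(h^2)
   uniformly in q, because the Q-matrices of P have uniformly bounded entries (finiteness of Q
   at -e_i bounds the rates -q_ii).  Taking the supremum over q gives
   S(h)u0 >= E_h u0 >= u0 + h Q u0 - O(h^2).  Conversely, for h m <= 1 the matrix I + h q is
   stochastic, so e^{hq} preserves upper bounds up to O(h^2); by induction over the points of a
   partition of [0, h], E_pi u0 <= u0 + h Q u0 + K h^2 with K independent of the partition,
   hence S(h)u0 <= u0 + h Q u0 + K h^2. *)

From Coquelicot Require Import Coquelicot.
From Stdlib Require Import Reals List Lra Lia ClassicalEpsilon Factorial FunctionalExtensionality.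
Open Scope R_scope.

Lemma fsum_ext n g h : (forall j, (j < n)%nat -> g j = h j) -> fsum n g = fsum n h.
Proof.
  induction n as [|n IH]; intros H; simpl; [reflexivity|].
  rewrite IH by (intros; apply H; lia). rewrite H by lia. reflexivity.
Qed.

Lemma fsum_le n g h : (forall j, (j < n)%nat -> g j <= h j) -> fsum n g <= fsum n h.
Proof.
  induction n as [|n IH]; intros H; simpl; [lra|].
  apply Rplus_le_compat; [apply IH; intros; apply H|apply H]; lia.
Qed.

Lemma fsum_plus n g h : fsum n (fun j => g j + h j) = fsum n g + fsum n h.
Proof. induction n as [|n IH]; simpl; [lra|]. rewrite IH; ring. Qed.

Lemma fsum_minus n g h : fsum n (fun j => g j - h j) = fsum n g - fsum n h.
Proof. induction n as [|n IH]; simpl; [lra|]. rewrite IH; ring. Qed.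

Lemma fsum_scal n c g : fsum n (fun j => c * g j) = c * fsum n g.
Proof. induction n as [|n IH]; simpl; [lra|]. rewrite IH; ring. Qed.

Lemma fsum_const n c : fsum n (fun _ => c) = INR n * c.
Proof. induction n as [|n IH]; simpl fsum; [simpl; lra|]. rewrite IH, S_INR; ring. Qed.

Lemma fsum_abs n g : Rabs (fsum n g) <= fsum n (fun j => Rabs (g j)).
Proof.
  induction n as [|n IH]; simpl; [rewrite Rabs_R0; lra|].
  eapply Rle_trans; [apply Rabs_triang|lra].
Qed.

Lemma fsum_nonneg n g : (forall l, (l < n)%nat -> 0 <= g l) -> 0 <= fsum n g.
Proof.
  intros Hg. rewrite <- (Rmult_0_r (INR n)), <- fsum_const. apply fsum_le, Hg.
Qed.

Lemma fsum_ge_term n g j :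
  (forall l, (l < n)%nat -> 0 <= g l) -> (j < n)%nat -> g j <= fsum n g.
Proof.
  induction n as [|n IH]; simpl; intros Hg Hj; [lia|].
  assert (0 <= g n) by (apply Hg; lia).
  destruct (Nat.eq_dec j n) as [->|ne].
  - pose proof (fsum_nonneg n g ltac:(intros; apply Hg; lia)). lra.
  - enough (g j <= fsum n g) by lra. apply IH; [intros; apply Hg|]; lia.
Qed.

Lemma fsum_idmat_l n i x : (i < n)%nat -> fsum n (fun j => idmat i j * x j) = x i.
Proof.
  induction n as [|n IH]; simpl; intros Hi; [lia|].
  unfold idmat at 2. destruct (Nat.eqb_spec i n) as [->|ne].
  - rewrite (fsum_ext n _ (fun _ => 0)), fsum_const; [ring|].
    intros j Hj. unfold idmat. destruct (Nat.eqb_spec n j); [lia|ring].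
  - rewrite IH by lia. ring.
Qed.

Lemma fsum_idmat_r n j x : (j < n)%nat -> fsum n (fun l => x l * idmat l j) = x j.
Proof.
  intros Hj. rewrite <- (fsum_idmat_l n j x Hj). apply fsum_ext. intros l _.
  unfold idmat. rewrite Nat.eqb_sym. ring.
Qed.

Lemma vnorm_nonneg d u : 0 <= vnorm d u.
Proof. induction d; simpl; [lra|]. eapply Rle_trans; [apply IHd|apply Rmax_l]. Qed.

Lemma vnorm_ge d u i : (i < d)%nat -> Rabs (u i) <= vnorm d u.
Proof.
  induction d as [|d IH]; simpl; intros Hi; [lia|].
  destruct (Nat.eq_dec i d) as [->|ne]; [apply Rmax_r|].
  eapply Rle_trans; [apply IH; lia|apply Rmax_l].
Qed.

Lemma vnorm_le d u c :
  0 <= c -> (forall i, (i < d)%nat -> Rabs (u i) <= c) -> vnorm d u <= c.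
Proof.
  induction d as [|d IH]; simpl; intros Hc H; [lra|].
  apply Rmax_lub; [apply IH|apply H]; auto.
Qed.

Lemma matvec_add d a u v i :
  matvec d a (fun j => u j + v j) i = matvec d a u i + matvec d a v i.
Proof. unfold matvec. rewrite <- fsum_plus. apply fsum_ext; intros; ring. Qed.

Lemma matvec_scal d a c u i : matvec d a (fun j => c * u j) i = c * matvec d a u i.
Proof. unfold matvec. rewrite <- fsum_scal. apply fsum_ext; intros; ring. Qed.

Lemma vnorm_small_of_quadratic_bound d (F : R -> vec) M h0 eps :
  0 <= M -> 0 < h0 -> 0 < eps ->
  (forall h i, 0 < h <= h0 -> (i < d)%nat -> Rabs (h * F h i) <= M * h ^ 2) ->
  exists delta, 0 < delta /\ forall h, 0 < h < delta -> vnorm d (F h) < eps.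
Proof.
  intros HM Hh0 Heps HF.
  exists (Rmin h0 (eps / (M + 1))).
  split; [apply Rmin_glb_lt; [lra|apply Rdiv_lt_0_compat; lra]|].
  intros h [Hh Hdelta].
  pose proof (Rmin_l h0 (eps / (M + 1))). pose proof (Rmin_r h0 (eps / (M + 1))).
  assert (HMh : M * h < eps).
  { apply Rlt_le_trans with ((M + 1) * h); [nra|].
    replace eps with ((M + 1) * (eps / (M + 1))) by (field; lra).
    apply Rmult_le_compat_l; lra. }
  apply Rle_lt_trans with (M * h); [|exact HMh].
  apply vnorm_le; [nra|]. intros i Hi.
  apply (Rmult_le_reg_l h); [lra|].
  rewrite <- (Rabs_pos_eq h) at 1 by lra. rewrite <- Rabs_mult.
  replace (h * (M * h)) with (M * h ^ 2) by ring.
  apply HF; auto; lra.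
Qed.

Lemma exp_ge_term x k : 0 <= x -> x ^ k / INR (fact k) <= exp x.
Proof.
  intros Hx. eapply Rle_trans; [|apply (exp_ge_taylor x k Hx)].
  destruct k as [|k]; [simpl; lra|].
  rewrite tech5. enough (0 <= sum_f_R0 (fun j => x ^ j / INR (fact j)) k) by lra.
  apply cond_pos_sum. intros j. apply Rdiv_le_0_compat; [apply pow_le; lra|apply INR_fact_lt_0].
Qed.

Lemma exp_dominated_CV_radius (a : nat -> R) N :
  (forall k, Rabs (a k) <= N ^ k / INR (fact k)) ->
  forall x, Rbar_lt (Rabs x) (CV_radius a).
Proof.
  intros Ha x.
  assert (HN : 0 <= N) by (specialize (Ha 1%nat); simpl in Ha; pose proof (Rabs_pos (a 1%nat)); lra).
  set (r := Rabs x + 1).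
  apply Rbar_lt_le_trans with (Finite r); [simpl; unfold r; lra|].
  apply (proj1 (CV_radius_bounded a)). exists (exp (r * N)). intros n.
  rewrite Rabs_mult, <- RPow_abs, (Rabs_pos_eq r) by (unfold r; pose proof (Rabs_pos x); lra).
  eapply Rle_trans; [|apply exp_ge_term; unfold r; pose proof (Rabs_pos x); nra].
  rewrite Rpow_mult_distr.
  replace (r ^ n * N ^ n / INR (fact n)) with (N ^ n / INR (fact n) * r ^ n) by (unfold Rdiv; ring).
  apply Rmult_le_compat_r; [apply pow_le; unfold r; pose proof (Rabs_pos x); lra|apply Ha].
Qed.

(* The terms of index >= 2 carry a factor t^2 because t <= 1. *)
Lemma pseries_partial_sum_quadratic (a : nat -> R) N t n :
  0 <= N -> 0 <= t <= 1 -> (forall k, Rabs (a k) <= N ^ k / INR (fact k)) -> (1 <= n)%nat ->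
  Rabs (sum_f_R0 (fun k => a k * t ^ k) n - (a 0%nat + a 1%nat * t)) <= t ^ 2 * exp N.
Proof.
  intros HN Ht Ha Hn.
  assert (Hterm : forall k, 0 <= N ^ k / INR (fact k))
    by (intros; apply Rdiv_le_0_compat; [apply pow_le; lra|apply INR_fact_lt_0]).
  eapply Rle_trans; [|apply Rmult_le_compat_l; [nra|apply (exp_ge_taylor N n HN)]].
  induction n as [|[|n] IH]; [lia| |].
  - simpl. replace (a 0%nat * 1 + a 1%nat * (t * 1) - (a 0%nat + a 1%nat * t)) with 0 by ring.
    rewrite Rabs_R0. pose proof (Hterm 0%nat). pose proof (Hterm 1%nat). simpl in *. nra.
  - rewrite !(tech5 _ (S n)).
    set (k := S (S n)).
    assert (Htk : t ^ k <= t ^ 2).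
    { unfold k. replace (S (S n)) with (2 + n)%nat by lia. rewrite pow_add.
      pose proof (pow_incr t 1 n ltac:(lra)) as Hle1. rewrite pow1 in Hle1.
      pose proof (pow_le t n ltac:(lra)). nra. }
    assert (Hak : Rabs (a k * t ^ k) <= t ^ 2 * (N ^ k / INR (fact k))).
    { rewrite Rabs_mult, (Rabs_pos_eq (t ^ k)) by (apply pow_le; lra).
      rewrite Rmult_comm. apply Rmult_le_compat; [apply pow_le; lra|apply Rabs_pos|exact Htk|apply Ha]. }
    pose proof (Rabs_triang (sum_f_R0 (fun k => a k * t ^ k) (S n) - (a 0%nat + a 1%nat * t))
                            (a k * t ^ k)) as Htri.
    specialize (IH ltac:(lia)).
    replace (sum_f_R0 (fun k => a k * t ^ k) (S n) + a k * t ^ k - (a 0%nat + a 1%nat * t))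
      with (sum_f_R0 (fun k => a k * t ^ k) (S n) - (a 0%nat + a 1%nat * t) + a k * t ^ k)
      by ring.
    lra.
Qed.

Lemma PSeries_Un_cv (a : nat -> R) x :
  Rbar_lt (Rabs x) (CV_radius a) ->
  Un_cv (fun n => sum_f_R0 (fun k => a k * x ^ k) n) (PSeries a x).
Proof.
  intros Hx. apply is_series_Reals, is_pseries_R, PSeries_correct, CV_radius_inside, Hx.
Qed.

Lemma Un_cv_abs_le (u : nat -> R) l a b :
  Un_cv u l -> (forall n, (1 <= n)%nat -> Rabs (u n - a) <= b) -> Rabs (l - a) <= b.
Proof.
  intros Hcv H. destruct (Rle_or_lt (Rabs (l - a)) b) as [|Hlt]; auto. exfalso.
  destruct (Hcv (Rabs (l - a) - b)) as [N HN]; [lra|].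
  specialize (HN (S N) ltac:(lia)). specialize (H (S N) ltac:(lia)). unfold R_dist in HN.
  pose proof (Rabs_triang (- (u (S N) - l)) (u (S N) - a)) as Htri.
  rewrite Rabs_Ropp in Htri. replace (- (u (S N) - l) + (u (S N) - a)) with (l - a) in Htri by ring.
  lra.
Qed.

Lemma integral_near_const g t c b :
  0 <= t -> (forall s, 0 <= s <= t -> continuity_pt g s) ->
  (forall s, 0 <= s <= t -> Rabs (g s - c) <= b) ->
  Rabs (integral g 0 t - t * c) <= t * b.
Proof.
  intros Ht Hc Hb.
  pose proof (continuity_implies_RiemannInt Ht Hc) as pr.
  unfold integral.
  destruct (epsilon_spec (inhabits 0)
              (fun I => exists pr : Riemann_integrable g 0 t, RiemannInt pr = I)
              (ex_intro _ _ (ex_intro _ pr eq_refl))) as [pr' <-].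
  pose proof (RiemannInt_P15 (RiemannInt_P14 0 t (c + b))) as Hup.
  pose proof (RiemannInt_P15 (RiemannInt_P14 0 t (c - b))) as Hlow.
  assert (RiemannInt pr' <= RiemannInt (RiemannInt_P14 0 t (c + b))).
  { apply RiemannInt_P19; auto. intros s Hs. unfold fct_cte.
    specialize (Hb s ltac:(lra)). apply Rabs_le_between in Hb. lra. }
  assert (RiemannInt (RiemannInt_P14 0 t (c - b)) <= RiemannInt pr').
  { apply RiemannInt_P19; auto. intros s Hs. unfold fct_cte.
    specialize (Hb s ltac:(lra)). apply Rabs_le_between in Hb. lra. }
  apply Rabs_le. nra.
Qed.

Lemma Rsup_lub (E : R -> Prop) U :
  (exists x, E x) -> (forall x, E x -> x <= U) -> is_lub E (Rsup E).
Proof.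
  intros Hne Hb. unfold Rsup. apply epsilon_spec.
  destruct (completeness E) as [l Hl]; [exists U; exact Hb|exact Hne|eauto].
Qed.

Lemma vsup_spec (V : vec -> Prop) i U :
  (exists v, V v) -> (forall v, V v -> v i <= U) ->
  (forall v, V v -> v i <= vsup V i) /\
  (forall B, (forall v, V v -> v i <= B) -> vsup V i <= B).
Proof.
  intros [v0 Hv0] Hb. unfold vsup.
  destruct (Rsup_lub (fun x => exists v, V v /\ v i = x) U) as [Hub Hleast].
  - exists (v0 i); eauto.
  - intros x [v [Hv <-]]; auto.
  - split.
    + intros v Hv. apply Hub; eauto.
    + intros B HB. apply Hleast. intros x [v [Hv <-]]. auto.
Qed.

Lemma finite_uniform_bound n (Pr : nat -> R -> Prop) :
  (forall i B B', B <= B' -> Pr i B -> Pr i B') ->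
  (forall i, (i < n)%nat -> exists B, Pr i B) ->
  exists B, 0 <= B /\ forall i, (i < n)%nat -> Pr i B.
Proof.
  intros Hmono. induction n as [|n IH]; intros H.
  - exists 0. split; [lra|intros; lia].
  - destruct IH as [B1 [HB1 H1]]; [intros; apply H; lia|].
    destruct (H n ltac:(lia)) as [B2 H2].
    exists (Rmax B1 B2). split; [eapply Rle_trans; [exact HB1|apply Rmax_l]|].
    intros i Hi. destruct (Nat.eq_dec i n) as [->|ne].
    + eapply Hmono; [apply Rmax_r|auto].
    + eapply Hmono; [apply Rmax_l|apply H1; lia].
Qed.

Lemma continuity_pt_fsum n (F : R -> nat -> R) x :
  (forall j, (j < n)%nat -> continuity_pt (fun s => F s j) x) ->
  continuity_pt (fun s => fsum n (F s)) x.
Proof.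
  induction n as [|n IH]; intros H; simpl.
  - apply continuity_pt_const. intros a b; reflexivity.
  - apply (continuity_pt_plus (fun s => fsum n (F s)) (fun s => F s n));
      [apply IH; intros; apply H|apply H]; lia.
Qed.

Section MatrixExponential.

Variables (d : nat) (q : mat) (m : R).
Hypothesis Hm : 0 <= m.
Hypothesis Hqm : forall i j, (i < d)%nat -> (j < d)%nat -> Rabs (q i j) <= m.

Lemma matvec_bound x i : (i < d)%nat -> Rabs (matvec d q x i) <= INR d * m * vnorm d x.
Proof.
  intros Hi. unfold matvec. eapply Rle_trans; [apply fsum_abs|].
  eapply Rle_trans; [apply fsum_le with (h := fun _ => m * vnorm d x)|rewrite fsum_const; lra].
  intros j Hj. rewrite Rabs_mult.
  apply Rmult_le_compat; [apply Rabs_pos|apply Rabs_pos|apply Hqm|apply vnorm_ge]; auto.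
Qed.

Lemma matpow_bound k i j :
  (i < d)%nat -> (j < d)%nat -> Rabs (matpow d q k i j) <= (INR d * m) ^ k.
Proof.
  revert i j. induction k as [|k IH]; intros i j Hi Hj; simpl.
  - unfold idmat. destruct (Nat.eqb i j); rewrite ?Rabs_R1, ?Rabs_R0; lra.
  - unfold matmul. eapply Rle_trans; [apply fsum_abs|].
    eapply Rle_trans; [apply fsum_le with (h := fun _ => m * (INR d * m) ^ k)|rewrite fsum_const; lra].
    intros l Hl. rewrite Rabs_mult.
    apply Rmult_le_compat; [apply Rabs_pos|apply Rabs_pos|apply Hqm|apply IH]; auto.
Qed.

Definition matexp_coef i j k := matpow d q k i j / INR (fact k).

Lemma matexp_coef_bound i j k : (i < d)%nat -> (j < d)%nat ->
  Rabs (matexp_coef i j k) <= (INR d * m) ^ k / INR (fact k).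
Proof.
  intros Hi Hj. unfold matexp_coef, Rdiv.
  rewrite Rabs_mult, (Rabs_pos_eq (/ _)) by (left; apply Rinv_0_lt_compat, INR_fact_lt_0).
  apply Rmult_le_compat_r; [left; apply Rinv_0_lt_compat, INR_fact_lt_0|apply matpow_bound; auto].
Qed.

Lemma matexp_entry_PSeries i j t : (i < d)%nat -> (j < d)%nat ->
  matexp d t q i j = PSeries (matexp_coef i j) t.
Proof.
  intros Hi Hj.
  pose proof (PSeries_Un_cv (matexp_coef i j) t
    (exp_dominated_CV_radius _ _ (fun k => matexp_coef_bound i j k Hi Hj) t)) as Hcv.
  replace (fun k => matexp_coef i j k * t ^ k)
    with (fun k => t ^ k / INR (fact k) * matpow d q k i j) in Hcv
    by (apply functional_extensionality; intros k; unfold matexp_coef, Rdiv; ring).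
  unfold matexp. eapply UL_sequence; [|exact Hcv]. apply epsilon_spec. eauto.
Qed.

Lemma matexp_entry_continuous i j x : (i < d)%nat -> (j < d)%nat ->
  continuity_pt (fun t => matexp d t q i j) x.
Proof.
  intros Hi Hj.
  apply continuity_pt_ext with (f := PSeries (matexp_coef i j)).
  - intros t. symmetry. apply matexp_entry_PSeries; auto.
  - apply PSeries_continuity, (exp_dominated_CV_radius _ _ (fun k => matexp_coef_bound i j k Hi Hj)).
Qed.

Lemma matexp_entry_taylor i j t : (i < d)%nat -> (j < d)%nat -> 0 <= t <= 1 ->
  Rabs (matexp d t q i j - idmat i j - t * q i j) <= t ^ 2 * exp (INR d * m).
Proof.
  intros Hi Hj Ht. rewrite matexp_entry_PSeries by auto.
  assert (Hc0 : matexp_coef i j 0 = idmat i j) by (unfold matexp_coef; simpl; field).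
  assert (Hc1 : matexp_coef i j 1 = q i j).
  { unfold matexp_coef; simpl. unfold matmul. rewrite fsum_idmat_r by auto. field. }
  replace (PSeries (matexp_coef i j) t - idmat i j - t * q i j)
    with (PSeries (matexp_coef i j) t - (matexp_coef i j 0 + matexp_coef i j 1 * t))
    by (rewrite Hc0, Hc1; ring).
  apply Un_cv_abs_le with (1 := PSeries_Un_cv _ _
    (exp_dominated_CV_radius _ _ (fun k => matexp_coef_bound i j k Hi Hj) t)).
  intros n Hn. apply pseries_partial_sum_quadratic; auto.
  - apply Rmult_le_pos; [apply pos_INR|exact Hm].
  - intros k. apply matexp_coef_bound; auto.
Qed.

Lemma matexp_apply_taylor x i t : (i < d)%nat -> 0 <= t <= 1 ->
  Rabs (matvec d (matexp d t q) x i - x i - t * matvec d q x i)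
    <= t ^ 2 * (INR d * exp (INR d * m) * vnorm d x).
Proof.
  intros Hi Ht.
  replace (matvec d (matexp d t q) x i - x i - t * matvec d q x i)
    with (fsum d (fun j => (matexp d t q i j - idmat i j - t * q i j) * x j)).
  - eapply Rle_trans; [apply fsum_abs|].
    eapply Rle_trans;
      [apply fsum_le with (h := fun _ => t ^ 2 * exp (INR d * m) * vnorm d x)|rewrite fsum_const; lra].
    intros j Hj. rewrite Rabs_mult.
    apply Rmult_le_compat; [apply Rabs_pos|apply Rabs_pos|apply matexp_entry_taylor|apply vnorm_ge]; auto.
  - unfold matvec. rewrite <- (fsum_idmat_l d i x Hi), <- fsum_scal, <- !fsum_minus.
    apply fsum_ext. intros; ring.
Qed.

Lemma matexp_apply_near_id y i s : (i < d)%nat -> 0 <= s <= 1 ->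
  Rabs (matvec d (matexp d s q) y i - y i)
    <= s * ((INR d * m + INR d * exp (INR d * m)) * vnorm d y).
Proof.
  intros Hi Hs.
  pose proof (matexp_apply_taylor y i s Hi Hs) as Htay.
  pose proof (matvec_bound y i Hi) as Hq.
  pose proof (Rabs_triang (matvec d (matexp d s q) y i - y i - s * matvec d q y i)
                          (s * matvec d q y i)) as Htri.
  rewrite Rabs_mult, (Rabs_pos_eq s) in Htri by lra.
  replace (matvec d (matexp d s q) y i - y i - s * matvec d q y i + s * matvec d q y i)
    with (matvec d (matexp d s q) y i - y i) in Htri by ring.
  assert (0 <= INR d * exp (INR d * m) * vnorm d y).
  { pose proof (pos_INR d). pose proof (exp_pos (INR d * m)). pose proof (vnorm_nonneg d y).
    apply Rmult_le_pos; [apply Rmult_le_pos|]; lra. }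
  assert (s ^ 2 <= s) by (simpl; nra).
  nra.
Qed.

(* I + t q has nonnegative entries and unit row sums once t m <= 1, so it preserves upper bounds. *)
Lemma matexp_apply_le y a i t : is_Qmatrix d q -> (i < d)%nat -> 0 <= t <= 1 -> t * m <= 1 ->
  (forall j, (j < d)%nat -> y j <= a) ->
  matvec d (matexp d t q) y i <= a + t ^ 2 * (INR d * exp (INR d * m) * vnorm d y).
Proof.
  intros [Hdiag [Hoff Hrow]] Hi Ht Htm Hy.
  pose proof (matexp_apply_taylor y i t Hi Ht) as Htay. apply Rabs_le_between in Htay.
  enough (y i + t * matvec d q y i <= a) by lra.
  replace (y i + t * matvec d q y i) with (fsum d (fun j => (idmat i j + t * q i j) * y j))
    by (unfold matvec; rewrite <- (fsum_idmat_l d i y Hi), <- fsum_scal, <- fsum_plus;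
        apply fsum_ext; intros; ring).
  replace a with (fsum d (fun j => (idmat i j + t * q i j) * a))
    by (rewrite (fsum_ext d _ (fun j => idmat i j * (fun _ => a) j + t * (a * q i j)))
          by (intros; ring);
        rewrite fsum_plus, fsum_idmat_l, !fsum_scal, Hrow by auto; ring).
  apply fsum_le. intros j Hj. apply Rmult_le_compat_l; auto.
  unfold idmat. destruct (Nat.eqb_spec i j) as [<-|ne].
  - specialize (Hqm i i Hi Hi). apply Rabs_le_between in Hqm. nra.
  - specialize (Hoff i j Hi Hj ne). nra.
Qed.

(* Remainder constant of S_q(t): d e^{dm} comes from e^{tq}, (dm + d e^{dm}) C from the integral term. *)
Definition taylor_const C := INR d * exp (INR d * m) + (INR d * m + INR d * exp (INR d * m)) * C.

Definition growth_const C := INR d * m + C + taylor_const C.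

Lemma taylor_const_nonneg C : 0 <= C -> 0 <= taylor_const C.
Proof.
  intros HC. unfold taylor_const. pose proof (pos_INR d). pose proof (exp_pos (INR d * m)).
  assert (0 <= INR d * m) by nra. assert (0 <= INR d * exp (INR d * m)) by nra. nra.
Qed.

Lemma growth_const_nonneg C : 0 <= C -> 0 <= growth_const C.
Proof.
  intros HC. unfold growth_const. pose proof (taylor_const_nonneg C HC).
  pose proof (pos_INR d). nra.
Qed.

Lemma Sq_taylor fq C x i t : vnorm d fq <= C -> (i < d)%nat -> 0 <= t <= 1 ->
  Rabs (Sq d q fq t x i - x i - t * (matvec d q x i + fq i))
    <= t ^ 2 * taylor_const C * (vnorm d x + 1).
Proof.
  intros HfC Hi Ht.
  set (N := INR d * m). set (E := INR d * exp N).
  assert (HN : 0 <= N) by (unfold N; pose proof (pos_INR d); nra).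
  assert (HE : 0 <= E) by (unfold E; pose proof (pos_INR d); pose proof (exp_pos N); nra).
  pose proof (matexp_apply_taylor x i t Hi Ht) as Hexp.
  assert (Hint : Rabs (integral (fun s => matvec d (matexp d s q) fq i) 0 t - t * fq i)
                   <= t * (t * ((N + E) * C))).
  { apply integral_near_const; [lra| |].
    - intros s _. unfold matvec. apply continuity_pt_fsum. intros j Hj.
      apply (continuity_pt_mult (fun s => matexp d s q i j) (fun _ => fq j)).
      + apply matexp_entry_continuous; auto.
      + apply continuity_pt_const. intros a b; reflexivity.
    - intros s Hs. eapply Rle_trans; [apply matexp_apply_near_id; auto; lra|].
      fold N E. apply Rmult_le_compat; [lra|pose proof (vnorm_nonneg d fq); nra|lra|].
      apply Rmult_le_compat_l; lra. }
  unfold Sq.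
  pose proof (Rabs_triang (matvec d (matexp d t q) x i - x i - t * matvec d q x i)
                          (integral (fun s => matvec d (matexp d s q) fq i) 0 t - t * fq i)) as Htri.
  replace (matvec d (matexp d t q) x i + integral (fun s => matvec d (matexp d s q) fq i) 0 t
           - x i - t * (matvec d q x i + fq i))
    with (matvec d (matexp d t q) x i - x i - t * matvec d q x i
          + (integral (fun s => matvec d (matexp d s q) fq i) 0 t - t * fq i)) by ring.
  eapply Rle_trans; [exact Htri|].
  unfold taylor_const. fold N E in Hexp |- *.
  pose proof (vnorm_nonneg d x).
  assert (t ^ 2 * (E * vnorm d x) <= t ^ 2 * E * (vnorm d x + 1)) by (simpl; nra).
  assert (0 <= t ^ 2 * ((N + E) * C) * vnorm d x).
  { pose proof (vnorm_nonneg d fq).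
    apply Rmult_le_pos; [apply Rmult_le_pos; [simpl; nra|apply Rmult_le_pos]|]; lra. }
  replace (t * (t * ((N + E) * C))) with (t ^ 2 * ((N + E) * C)) in Hint by ring.
  nra.
Qed.

Lemma Sq_near_id fq C x i t : vnorm d fq <= C -> (i < d)%nat -> 0 <= t <= 1 ->
  Rabs (Sq d q fq t x i - x i) <= t * growth_const C * (vnorm d x + 1).
Proof.
  intros HfC Hi Ht.
  pose proof (Sq_taylor fq C x i t HfC Hi Ht) as Htay.
  pose proof (matvec_bound x i Hi) as Hq. pose proof (vnorm_ge d fq i Hi) as Hf.
  pose proof (taylor_const_nonneg C ltac:(pose proof (vnorm_nonneg d fq); lra)) as HA.
  pose proof (vnorm_nonneg d x). pose proof (pos_INR d).
  assert (Hlin : Rabs (t * (matvec d q x i + fq i)) <= t * ((INR d * m + C) * (vnorm d x + 1))).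
  { rewrite Rabs_mult, (Rabs_pos_eq t) by lra. apply Rmult_le_compat_l; [lra|].
    eapply Rle_trans; [apply Rabs_triang|].
    assert (0 <= INR d * m) by nra. assert (0 <= C * vnorm d x) by (pose proof (vnorm_nonneg d fq); nra).
    nra. }
  pose proof (Rabs_triang (Sq d q fq t x i - x i - t * (matvec d q x i + fq i))
                          (t * (matvec d q x i + fq i))) as Htri.
  replace (Sq d q fq t x i - x i - t * (matvec d q x i + fq i) + t * (matvec d q x i + fq i))
    with (Sq d q fq t x i - x i) in Htri by ring.
  unfold growth_const.
  assert (t ^ 2 * taylor_const C * (vnorm d x + 1) <= t * taylor_const C * (vnorm d x + 1)).
  { apply Rmult_le_compat_r; [lra|]. apply Rmult_le_compat_r; [lra|simpl; nra]. }
  nra.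
Qed.

End MatrixExponential.

Lemma Qmatrix_entry_le_diag d q i j : is_Qmatrix d q -> (i < d)%nat -> (j < d)%nat ->
  Rabs (q i j) <= - q i i.
Proof.
  intros [Hdiag [Hoff Hrow]] Hi Hj.
  destruct (Nat.eq_dec i j) as [<-|ne]; [rewrite Rabs_left1 by auto; lra|].
  rewrite Rabs_pos_eq by (apply Hoff; auto).
  replace (- q i i) with (fsum d (fun k => q i k - idmat i k * q i i))
    by (rewrite fsum_minus, Hrow, (fsum_idmat_l d i (fun _ => q i i)) by auto; ring).
  replace (q i j) with (q i j - idmat i j * q i i)
    by (unfold idmat; destruct (Nat.eqb_spec i j); [lia|ring]).
  apply (fsum_ge_term d (fun k => q i k - idmat i k * q i i)); auto.
  intros k Hk. unfold idmat. destruct (Nat.eqb_spec i k) as [<-|ne'].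
  - lra.
  - specialize (Hoff i k Hi Hk ne'). lra.
Qed.

(* Applying the finiteness of [Qop] to the vector [-e_i] bounds the rates [- q i i]. *)
Lemma Qmatrix_family_bounded d (P : mat -> Prop) (f : mat -> vec) C :
  (forall q, P q -> is_Qmatrix d q) -> (forall q, P q -> vnorm d (f q) <= C) ->
  (forall (u : vec) i, (i < d)%nat ->
     bound (fun x => exists q, P q /\ x = matvec d q u i + f q i)) ->
  exists m, 0 <= m /\ forall q, P q -> forall i j, (i < d)%nat -> (j < d)%nat -> Rabs (q i j) <= m.
Proof.
  intros HQ HfC Hfin.
  destruct (finite_uniform_bound d (fun i B => forall q, P q -> - q i i <= B)) as [m [Hm Hdiag]].
  - intros i B B' HB H q Hq. specialize (H q Hq). lra.
  - intros i Hi. destruct (Hfin (fun j => - idmat i j) i Hi) as [B HB].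
    exists (B + C). intros q Hq.
    assert (Hprobe : matvec d q (fun j => - idmat i j) i = - q i i).
    { unfold matvec. rewrite (fsum_ext d _ (fun l => -1 * (q i l * idmat l i))).
      - rewrite fsum_scal, (fsum_idmat_r d i (q i)) by auto. ring.
      - intros l _. unfold idmat. rewrite Nat.eqb_sym. ring. }
    assert (matvec d q (fun j => - idmat i j) i + f q i <= B) by (apply HB; eauto).
    pose proof (vnorm_ge d (f q) i Hi) as Hf. apply Rabs_le_between in Hf.
    pose proof (HfC q Hq). lra.
  - exists m. split; auto. intros q Hq i j Hi Hj.
    eapply Rle_trans; [apply (Qmatrix_entry_le_diag d)|apply Hdiag]; auto.
Qed.

Lemma Sq_shift d q fq t w z i :
  Sq d q fq t w i = Sq d q fq t z i + matvec d (matexp d t q) (fun j => w j - z j) i.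
Proof.
  unfold Sq.
  replace w with (fun j => z j + (w j - z j)) at 1 by (apply functional_extensionality; intros; ring).
  rewrite matvec_add. ring.
Qed.

Lemma last_ge p l : incr_from p l -> p <= last (p :: l) 0.
Proof.
  revert p. induction l as [|t l IH]; intros p H; simpl; [lra|].
  destruct H as [Hpt H]. specialize (IH t H). simpl in IH. destruct l; lra.
Qed.

Section NisioEstimates.

Variables (d : nat) (P : mat -> Prop) (f : mat -> vec) (q0 : mat) (m C : R).
Hypothesis HQ : forall q, P q -> is_Qmatrix d q.
Hypothesis Hq0 : P q0.
Hypothesis Hfin : forall (u : vec) i, (i < d)%nat ->
  bound (fun x => exists q, P q /\ x = matvec d q u i + f q i).
Hypothesis Hm : 0 <= m.
Hypothesis Hqm : forall q, P q -> forall i j, (i < d)%nat -> (j < d)%nat -> Rabs (q i j) <= m.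
Hypothesis HfC : forall q, P q -> vnorm d (f q) <= C.

Let HC : 0 <= C := Rle_trans _ _ _ (vnorm_nonneg d (f q0)) (HfC q0 Hq0).

Lemma Qop_spec u i : (i < d)%nat ->
  (forall q, P q -> matvec d q u i + f q i <= Qop d P f u i) /\
  (forall B, (forall q, P q -> matvec d q u i + f q i <= B) -> Qop d P f u i <= B).
Proof.
  intros Hi. destruct (Hfin u i Hi) as [U HU].
  destruct (vsup_spec (fun v => exists q, P q /\ v = (fun i => matvec d q u i + f q i)) i U)
    as [Hub Hleast].
  - eexists. exists q0. split; [exact Hq0|reflexivity].
  - intros v [q [Hq ->]]. apply HU. eauto.
  - split.
    + intros q Hq. apply (Hub (fun i => matvec d q u i + f q i)). eauto.
    + intros B HB. apply Hleast. intros v [q [Hq ->]]. auto.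
Qed.

Lemma Eh_spec x i t : (i < d)%nat -> 0 <= t <= 1 ->
  (forall q, P q -> Sq d q (f q) t x i <= Eh d P f t x i) /\
  (forall B, (forall q, P q -> Sq d q (f q) t x i <= B) -> Eh d P f t x i <= B).
Proof.
  intros Hi Ht.
  destruct (vsup_spec (fun v => exists q, P q /\ v = Sq d q (f q) t x) i
              (x i + t * growth_const d m C * (vnorm d x + 1))) as [Hub Hleast].
  - eexists. exists q0. split; [exact Hq0|reflexivity].
  - intros v [q [Hq ->]].
    pose proof (Sq_near_id d q m Hm (Hqm q Hq) (f q) C x i t (HfC q Hq) Hi Ht) as Hnear.
    apply Rabs_le_between in Hnear. lra.
  - split.
    + intros q Hq. apply (Hub (Sq d q (f q) t x)). eauto.
    + intros B HB. apply Hleast. intros v [q [Hq ->]]. auto.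
Qed.

Lemma Eh_near_id x i t : (i < d)%nat -> 0 <= t <= 1 ->
  Rabs (Eh d P f t x i - x i) <= t * growth_const d m C * (vnorm d x + 1).
Proof.
  intros Hi Ht. destruct (Eh_spec x i t Hi Ht) as [Hub Hleast].
  assert (Hnear : forall q, P q ->
            Rabs (Sq d q (f q) t x i - x i) <= t * growth_const d m C * (vnorm d x + 1))
    by (intros q Hq; exact (Sq_near_id d q m Hm (Hqm q Hq) (f q) C x i t (HfC q Hq) Hi Ht)).
  pose proof (Hnear q0 Hq0) as H0. apply Rabs_le_between in H0. pose proof (Hub q0 Hq0).
  assert (Eh d P f t x i <= x i + t * growth_const d m C * (vnorm d x + 1)).
  { apply Hleast. intros q Hq. specialize (Hnear q Hq). apply Rabs_le_between in Hnear. lra. }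
  apply Rabs_le. lra.
Qed.

Lemma Eh_norm x t : 0 <= t <= 1 ->
  vnorm d (Eh d P f t x) + 1 <= (vnorm d x + 1) * exp (t * growth_const d m C).
Proof.
  intros Ht. set (G := growth_const d m C).
  assert (HG : 0 <= G) by apply (growth_const_nonneg d m Hm C HC).
  pose proof (vnorm_nonneg d x).
  assert (0 <= t * G * (vnorm d x + 1)) by (apply Rmult_le_pos; [apply Rmult_le_pos|]; lra).
  assert (vnorm d (Eh d P f t x) <= vnorm d x + t * G * (vnorm d x + 1)).
  { apply vnorm_le; [lra|]. intros i Hi.
    pose proof (Eh_near_id x i t Hi Ht) as Hnear. pose proof (vnorm_ge d x i Hi).
    pose proof (Rabs_triang (Eh d P f t x i - x i) (x i)) as Htri.
    replace (Eh d P f t x i - x i + x i) with (Eh d P f t x i) in Htri by ring.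
    fold G in Hnear. lra. }
  assert ((vnorm d x + 1) * (1 + t * G) <= (vnorm d x + 1) * exp (t * G))
    by (apply Rmult_le_compat_l; [lra|apply exp_ineq1_le]).
  nra.
Qed.

Lemma Ecomp_norm x l p : incr_from p l -> 0 <= p -> last (p :: l) 0 <= 1 ->
  vnorm d (Ecomp d P f p l x) + 1
    <= (vnorm d x + 1) * exp ((last (p :: l) 0 - p) * growth_const d m C).
Proof.
  revert p. induction l as [|t l IH]; intros p Hinc Hp Hlast.
  - simpl. replace ((p - p) * growth_const d m C) with 0 by ring. rewrite exp_0. lra.
  - destruct Hinc as [Hpt Hinc]. simpl Ecomp.
    change (last (p :: t :: l) 0) with (last (t :: l) 0) in *.
    pose proof (last_ge t l Hinc).
    specialize (IH t Hinc ltac:(lra) Hlast).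
    pose proof (Eh_norm (Ecomp d P f t l x) (t - p) ltac:(lra)) as Hstep.
    replace ((last (t :: l) 0 - p) * growth_const d m C)
      with ((last (t :: l) 0 - t) * growth_const d m C + (t - p) * growth_const d m C) by ring.
    rewrite exp_plus, <- Rmult_assoc.
    eapply Rle_trans; [exact Hstep|].
    apply Rmult_le_compat_r; [left; apply exp_pos|exact IH].
Qed.

Variable u0 : vec.

Local Notation Q0 := (Qop d P f u0).

Definition second_order_const :=
  INR d * m * vnorm d Q0 + taylor_const d m C * (vnorm d u0 + vnorm d Q0 + 1)
  + INR d * exp (INR d * m)
      * ((vnorm d u0 + 1) * exp (growth_const d m C) + vnorm d u0 + vnorm d Q0).

Lemma second_order_const_nonneg : 0 <= second_order_const.
Proof.
  unfold second_order_const.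
  pose proof (pos_INR d). pose proof (vnorm_nonneg d u0). pose proof (vnorm_nonneg d Q0).
  pose proof (taylor_const_nonneg d m Hm C HC). pose proof (exp_pos (INR d * m)).
  pose proof (exp_pos (growth_const d m C)).
  assert (0 <= INR d * m * vnorm d Q0) by (apply Rmult_le_pos; nra).
  assert (0 <= INR d * exp (INR d * m)) by nra.
  assert (0 <= (vnorm d u0 + 1) * exp (growth_const d m C)) by nra.
  nra.
Qed.

Lemma Sq_affine_upper q s tau i : P q -> (i < d)%nat -> 0 <= s <= 1 -> 0 <= tau <= 1 ->
  Sq d q (f q) s (fun j => u0 j + tau * Q0 j) i
    <= u0 i + (s + tau) * Q0 i + s * tau * (INR d * m * vnorm d Q0)
       + s ^ 2 * taylor_const d m C * (vnorm d u0 + vnorm d Q0 + 1).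
Proof.
  intros Hq Hi Hs Htau. set (z := fun j => u0 j + tau * Q0 j).
  pose proof (Sq_taylor d q m Hm (Hqm q Hq) (f q) C z i s (HfC q Hq) Hi Hs) as Htay.
  apply Rabs_le_between in Htay.
  assert (Hqz : matvec d q z i = matvec d q u0 i + tau * matvec d q Q0 i)
    by (unfold z; rewrite matvec_add, matvec_scal; reflexivity).
  pose proof (proj1 (Qop_spec u0 i Hi) q Hq) as HQ0.
  pose proof (matvec_bound d q m (Hqm q Hq) Q0 i Hi) as Hb. apply Rabs_le_between in Hb.
  assert (Hz : vnorm d z <= vnorm d u0 + vnorm d Q0).
  { pose proof (vnorm_nonneg d u0). pose proof (vnorm_nonneg d Q0).
    apply vnorm_le; [lra|]. intros j Hj. unfold z.
    pose proof (vnorm_ge d u0 j Hj). pose proof (vnorm_ge d Q0 j Hj).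
    eapply Rle_trans; [apply Rabs_triang|]. rewrite Rabs_mult, (Rabs_pos_eq tau) by lra. nra. }
  pose proof (taylor_const_nonneg d m Hm C HC).
  assert (s * (tau * matvec d q Q0 i) <= s * tau * (INR d * m * vnorm d Q0)).
  { rewrite <- Rmult_assoc. apply Rmult_le_compat_l; [nra|lra]. }
  assert (s * (matvec d q u0 i + f q i) <= s * Q0 i) by (apply Rmult_le_compat_l; lra).
  assert (s ^ 2 * taylor_const d m C * (vnorm d z + 1)
            <= s ^ 2 * taylor_const d m C * (vnorm d u0 + vnorm d Q0 + 1))
    by (apply Rmult_le_compat_l; [simpl; nra|lra]).
  assert (Hzi : z i = u0 i + tau * Q0 i) by reflexivity.
  rewrite Hqz, Hzi in Htay. lra.
Qed.

(* One step of the induction over partitions: [second_order_const] is chosen so that the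
   error terms of a step of length [s] after a stretch of length [tau] fit into
   [K (s + tau)^2 - K tau^2]. *)
Lemma Eh_step_upper w s tau i : (i < d)%nat -> 0 <= s <= 1 -> 0 <= tau <= 1 -> s * m <= 1 ->
  (forall j, (j < d)%nat -> w j <= u0 j + tau * Q0 j + second_order_const * tau ^ 2) ->
  vnorm d w + 1 <= (vnorm d u0 + 1) * exp (growth_const d m C) ->
  Eh d P f s w i <= u0 i + (s + tau) * Q0 i + second_order_const * (s + tau) ^ 2.
Proof.
  intros Hi Hs Htau Hsm Hw Hnw.
  set (K := second_order_const). set (z := fun j => u0 j + tau * Q0 j).
  set (R1 := (vnorm d u0 + 1) * exp (growth_const d m C) + vnorm d u0 + vnorm d Q0).
  set (L := INR d * m * vnorm d Q0). set (A := taylor_const d m C).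
  set (D := INR d * exp (INR d * m)).
  pose proof (vnorm_nonneg d u0). pose proof (vnorm_nonneg d Q0).
  assert (HL : 0 <= L) by (unfold L; pose proof (pos_INR d); apply Rmult_le_pos; nra).
  assert (HA : 0 <= A) by apply (taylor_const_nonneg d m Hm C HC).
  assert (HD : 0 <= D) by (unfold D; pose proof (pos_INR d); pose proof (exp_pos (INR d * m)); nra).
  assert (HR1 : 0 <= R1) by (unfold R1; pose proof (exp_pos (growth_const d m C)); nra).
  assert (HK : K = L + A * (vnorm d u0 + vnorm d Q0 + 1) + D * R1) by reflexivity.
  assert (Hwz : vnorm d (fun j => w j - z j) <= R1).
  { apply vnorm_le; [lra|]. intros j Hj. unfold z, R1.
    pose proof (vnorm_ge d u0 j Hj). pose proof (vnorm_ge d Q0 j Hj). pose proof (vnorm_ge d w j Hj).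
    pose proof (Rabs_triang (w j) (- u0 j - tau * Q0 j)) as Htri.
    pose proof (Rabs_triang (- u0 j) (- (tau * Q0 j))) as Htri'.
    rewrite !Rabs_Ropp, Rabs_mult, (Rabs_pos_eq tau) in Htri' by lra.
    replace (w j + (- u0 j - tau * Q0 j)) with (w j - (u0 j + tau * Q0 j)) in Htri by ring.
    replace (- u0 j + - (tau * Q0 j)) with (- u0 j - tau * Q0 j) in Htri' by ring.
    nra. }
  apply (proj2 (Eh_spec w i s Hi Hs)). intros q Hq.
  rewrite (Sq_shift d q (f q) s w z i).
  pose proof (Sq_affine_upper q s tau i Hq Hi Hs Htau) as Haff. fold z L A in Haff.
  assert (Hdev : matvec d (matexp d s q) (fun j => w j - z j) i
                   <= K * tau ^ 2 + s ^ 2 * (D * vnorm d (fun j => w j - z j))).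
  { apply (matexp_apply_le d q m Hm (Hqm q Hq)); [apply HQ, Hq|exact Hi|exact Hs|exact Hsm|].
    intros j Hj. unfold z; cbv beta. specialize (Hw j Hj). fold K in Hw. lra. }
  assert (s ^ 2 * (D * vnorm d (fun j => w j - z j)) <= s ^ 2 * (D * R1))
    by (apply Rmult_le_compat_l; [simpl; nra|apply Rmult_le_compat_l; lra]).
  assert (s * tau * L <= 2 * (s * tau * K)).
  { assert (0 <= s * tau) by nra. assert (L <= K) by (rewrite HK; nra). nra. }
  replace (K * (s + tau) ^ 2)
    with (K * tau ^ 2 + 2 * (s * tau * K)
          + (s ^ 2 * L + s ^ 2 * A * (vnorm d u0 + vnorm d Q0 + 1) + s ^ 2 * (D * R1)))
    by (rewrite HK; ring).
  assert (0 <= s ^ 2 * L) by (apply Rmult_le_pos; [simpl; nra|lra]).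
  lra.
Qed.

Lemma Ecomp_upper l p : incr_from p l -> 0 <= p -> last (p :: l) 0 <= 1 ->
  last (p :: l) 0 * m <= 1 -> forall i, (i < d)%nat ->
  Ecomp d P f p l u0 i
    <= u0 i + (last (p :: l) 0 - p) * Q0 i + second_order_const * (last (p :: l) 0 - p) ^ 2.
Proof.
  revert p. induction l as [|t l IH]; intros p Hinc Hp Hlast Hlastm i Hi.
  - simpl. replace (p - p) with 0 by ring. lra.
  - destruct Hinc as [Hpt Hinc]. simpl Ecomp.
    change (last (p :: t :: l) 0) with (last (t :: l) 0) in *.
    set (T := last (t :: l) 0) in *.
    pose proof (last_ge t l Hinc) as HtT. fold T in HtT.
    replace (T - p) with ((t - p) + (T - t)) by ring.
    apply Eh_step_upper; auto; try lra.
    + nra.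
    + intros j Hj. pose proof (IH t Hinc ltac:(lra) Hlast Hlastm j Hj) as HIH. fold T in HIH. lra.
    + eapply Rle_trans; [apply (Ecomp_norm u0 l t Hinc); fold T; lra|].
      apply Rmult_le_compat_l; [pose proof (vnorm_nonneg d u0); lra|].
      pose proof (growth_const_nonneg d m Hm C HC). fold T.
      destruct (Rle_lt_or_eq_dec ((T - t) * growth_const d m C) (growth_const d m C))
        as [Hlt|Heq]; [nra|left; apply exp_increasing; exact Hlt|rewrite Heq; lra].
Qed.

Lemma Nisio_spec h i : 0 < h <= 1 -> h * m <= 1 -> (i < d)%nat ->
  Eh d P f h u0 i <= Nisio d P f h u0 i <= u0 i + h * Q0 i + second_order_const * h ^ 2.
Proof.
  intros Hh Hhm Hi.
  set (VN := fun v => exists l, in_Pt h l /\ v = Epi d P f l u0).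
  assert (Hsingle : VN (Eh d P f h u0)).
  { exists (h :: nil). split; [simpl; repeat split; auto; lra|].
    simpl. f_equal. ring. }
  assert (Hbound : forall v, VN v -> v i <= u0 i + h * Q0 i + second_order_const * h ^ 2).
  { intros v [[|t l] [[Hinc Hlast] ->]]; [simpl in Hlast; lra|].
    pose proof (Ecomp_upper (t :: l) 0 Hinc ltac:(lra) ltac:(rewrite Hlast; lra)
                  ltac:(rewrite Hlast; lra) i Hi) as Hup.
    rewrite Hlast, Rminus_0_r in Hup. exact Hup. }
  destruct (vsup_spec VN i _ (ex_intro _ _ Hsingle) Hbound) as [Hub Hleast].
  split; [apply Hub, Hsingle|apply Hleast, Hbound].
Qed.

Lemma Nisio_second_order : exists M, 0 <= M /\ forall h i,
  0 < h <= 1 -> h * m <= 1 -> (i < d)%nat ->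
  Rabs (Nisio d P f h u0 i - u0 i - h * Q0 i) <= M * h ^ 2.
Proof.
  set (A := taylor_const d m C * (vnorm d u0 + 1)).
  assert (HA : 0 <= A) by (unfold A; pose proof (vnorm_nonneg d u0);
    pose proof (taylor_const_nonneg d m Hm C HC); nra).
  exists (second_order_const + A). split; [pose proof second_order_const_nonneg; lra|].
  intros h i Hh Hhm Hi.
  destruct (Nisio_spec h i Hh Hhm Hi) as [HEh HN].
  assert (Hlow : Q0 i <= (Nisio d P f h u0 i - u0 i + A * h ^ 2) / h).
  { apply (proj2 (Qop_spec u0 i Hi)). intros q Hq. apply Rle_div_r; [lra|].
    pose proof (Sq_taylor d q m Hm (Hqm q Hq) (f q) C u0 i h (HfC q Hq) Hi ltac:(lra)) as Htay.
    apply Rabs_le_between in Htay. pose proof (proj1 (Eh_spec u0 i h Hi ltac:(lra)) q Hq).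
    unfold A. nra. }
  apply (Rmult_le_compat_l h) in Hlow; [|lra].
  replace (h * ((Nisio d P f h u0 i - u0 i + A * h ^ 2) / h))
    with (Nisio d P f h u0 i - u0 i + A * h ^ 2) in Hlow by (field; lra).
  assert (0 <= second_order_const * h ^ 2)
    by (apply Rmult_le_pos; [apply second_order_const_nonneg|simpl; nra]).
  assert (0 <= A * h ^ 2) by (apply Rmult_le_pos; [lra|simpl; nra]).
  apply Rabs_le. lra.
Qed.

End NisioEstimates.

Theorem mainTheorem11 (d : nat) (P : mat -> Prop) (f : mat -> vec) (q0 : mat)
  (HQ : forall q, P q -> is_Qmatrix d q)
  (Hq0 : P q0)
  (Hf0 : forall i, (i < d)%nat -> f q0 i = 0)
  (Hfle : forall q i, P q -> (i < d)%nat -> f q i <= 0)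
  (Hfin : forall (u : vec) i, (i < d)%nat ->
     bound (fun x => exists q, P q /\ x = matvec d q u i + f q i))
  (Hbdd : exists C, forall q, P q -> vnorm d (f q) <= C) :
  forall u0 : vec, forall eps, 0 < eps -> exists delta, 0 < delta /\
    forall h, 0 < h < delta ->
      vnorm d (fun i => (Nisio d P f h u0 i - u0 i) / h - Qop d P f u0 i) < eps.
Proof.
  intros u0 eps Heps.
  destruct Hbdd as [C HfC].
  destruct (Qmatrix_family_bounded d P f C HQ HfC Hfin) as [m [Hm Hqm]].
  destruct (Nisio_second_order d P f q0 m C HQ Hq0 Hfin Hm Hqm HfC u0) as [M [HM Hexp]].
  apply (vnorm_small_of_quadratic_bound d _ M (Rmin 1 (/ (m + 1)))); auto.
  - apply Rmin_glb_lt; [lra|apply Rinv_0_lt_compat; lra].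
  - intros h i [Hh Hh0] Hi.
    pose proof (Rmin_l 1 (/ (m + 1))). pose proof (Rmin_r 1 (/ (m + 1))).
    assert (Hhm : h * (m + 1) <= 1).
    { replace 1 with (/ (m + 1) * (m + 1)) at 2 by (field; lra).
      apply Rmult_le_compat_r; lra. }
    replace (h * ((Nisio d P f h u0 i - u0 i) / h - Qop d P f u0 i))
      with (Nisio d P f h u0 i - u0 i - h * Qop d P f u0 i) by (field; lra).
    apply Hexp; [split|nra|]; auto; lra.
Qed.
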